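(* A dual-convex $m\times n$ net in $I^3$ has the property that any two non-boundary vertices joined by an edge have equal opposite ratios with respect to that edge if and only if it has a v-parallel $m\times n$ net such that at all corresponding vertices the curvatures of the two nets are opposite and their mixed curvature vanishes.
   Context: $I^3$ is real affine 3-space with the isotropic semi-norm $\|(x,y,z)\|_i=\sqrt{x^2+y^2}$; lines and planes parallel to the $z$-axis are called isotropic, and the top view $\overline{P}$ of a point $P$ is its projection to the plane $z=0$. The isotropic angle between two non-isotropic planes is the absolute value of the difference of their slopes (tangent of the Euclidean angle with the $xy$-plane). Metric duality maps a point $P=(P^1,P^2,P^3)$ to the plane $P^*: z=P^1x+P^2y-P^3$ and vice versa. An $m\times n$ net is a collection of points $F_{ij}$, $0\le i\le m$, $0\le j\le n$, such that $F_{ij},F_{i+1,j},F_{i+1,j+1},F_{i,j+1}$ are consecutive vertices of a convex quadrilateral (face $p_{ij}$); a vertex with $i\in\{0,m\}$ or $j\in\{0,n\}$ is a boundary vertex. A convex 4-hedral angle is admissible if the isotropic line through its vertex meets its interior; an $m\times n$ net is dual-convex if $m,n\ge2$ and the planes of the four consecutive faces around each non-boundary vertex are the planes of four consecutive flat angles of an admissible 4-hedral angle. For consecutive faces $p_1,p_2,p_3,p_4$ around a non-boundary vertex, the top views $\overline{p_1^*},\dots,\overline{p_4^*}$ of the points metric dual to their planes form a closed broken line (the top view of the isotropic Gauss image); the curvature at the vertex is its oriented area $\frac12\sum_{k=1}^4\det(\overline{p_k^*},\overline{p_{k+1}^*})$, $\overline{p_5^*}=\overline{p_1^*}$. Two $m\times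 n$ nets are v-parallel if vertices with the same indices have the same top view. The mixed curvature of corresponding non-boundary vertices of two v-parallel nets is the mixed area $\frac{d}{dt}\mathrm{Area}(A+tA',B+tB',C+tC',D+tD')|_{t=0}$ of the two top views $ABCD$, $A'B'C'D'$ of their isotropic Gauss images (which have parallel corresponding sides); for boundary vertices it is set to vanish. For a non-boundary vertex and an edge $e$ emanating from it, number the consecutive faces $p_1,\dots,p_4$ around it so that $p_1\cap p_4=e$, and let $p$ be the plane spanned by the lines $p_1\cap p_3$ and $p_2\cap p_4$; the opposite ratio of the vertex with respect to $e$ is $\frac{\angle(p_1,p)}{\angle(p_3,p)}\cdot\frac{\angle(p_4,p)}{\angle(p_2,p)}$ (isotropic angles). *)

From HB Require Import structures.
From mathcomp Require Import all_boot all_order all_algebra.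
From mathcomp Require Import reals.
From Stdlib Require Import ClassicalEpsilon.

Set Implicit Arguments.
Unset Strict Implicit.
Unset Printing Implicit Defensive.

Import Order.TTheory GRing.Theory Num.Theory.
Local Open Scope ring_scope.

Section IsotropicNets.
Variable R : realType.

Record pt := Pt { px : R; py : R; pz : R }.

Definition padd (P Q : pt) : pt := Pt (px P + px Q) (py P + py Q) (pz P + pz Q).
Definition psub (P Q : pt) : pt := Pt (px P - px Q) (py P - py Q) (pz P - pz Q).
Definition pscale (a : R) (P : pt) : pt := Pt (a * px P) (a * py P) (a * pz P).
Definition dot (u v : pt) : R := px u * px v + py u * py v + pz u * pz v.
Definition cross (u v : pt) : pt :=
  Pt (py u * pz v - pz u * py v) (pz u * px v - px u * pz v) (px u * py v - py u * px v).
Definition det3 (u v w : pt) : R := dot (cross u v) w.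

Definition top (P : pt) : R * R := (px P, py P).

Definition aspan (A u v : pt) : pt -> Prop :=
  fun P => exists a b : R, P = padd A (padd (pscale a u) (pscale b v)).

Definition is_plane (p : pt -> Prop) : Prop :=
  exists A u v, cross u v <> Pt 0 0 0 /\ (forall P, p P <-> aspan A u v P).

(* p is the plane z = a x + b y + c (a non-isotropic plane) *)
Definition is_np (p : pt -> Prop) (a b c : R) : Prop :=
  forall P, p P <-> pz P = a * px P + b * py P + c.

(* metric duality: the plane z = a x + b y + c is P^* for P = (a, b, -c).
   For a non-isotropic plane, the coefficients are unique; they are chosen
   by (classical) description. *)
Definition dual_pl (p : pt -> Prop) : pt :=
  let t := epsilon (inhabits (0, 0, 0))
             (fun t : R * R * R => is_np p t.1.1 t.1.2 t.2) in
  Pt t.1.1 t.1.2 (- t.2).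

Definition inorm2 (u : R * R) : R := Num.sqrt (u.1 ^+ 2 + u.2 ^+ 2).

Definition iang (p q : pt -> Prop) : R :=
  let g := top (dual_pl p) in let h := top (dual_pl q) in
  inorm2 (g.1 - h.1, g.2 - h.2).

(* A, B, C, D are consecutive vertices of a convex quadrilateral:
   coplanar, and the polygon turns in the same (nonzero) sense at every vertex. *)
Definition turn (X Y Z : pt) : pt := cross (psub Y X) (psub Z Y).
Definition convex_quad (A B C D : pt) : Prop :=
  det3 (psub B A) (psub C A) (psub D A) = 0 /\
  0 < dot (turn A B C) (turn B C D) /\
  0 < dot (turn B C D) (turn C D A) /\
  0 < dot (turn C D A) (turn D A B) /\
  0 < dot (turn D A B) (turn A B C).

(* An m x n net: points F i j, 0 <= i <= m, 0 <= j <= n (values of F outside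
   this range are irrelevant). *)
Definition net (m n : nat) (F : nat -> nat -> pt) : Prop :=
  forall i j, (i < m)%N -> (j < n)%N ->
    convex_quad (F i j) (F i.+1 j) (F i.+1 j.+1) (F i j.+1).

Definition nonboundary (m n i j : nat) : Prop :=
  (0 < i)%N /\ (i < m)%N /\ (0 < j)%N /\ (j < n)%N.

Definition face (F : nat -> nat -> pt) (i j : nat) : pt -> Prop :=
  aspan (F i j) (psub (F i.+1 j) (F i j)) (psub (F i j.+1) (F i j)).

Definition vface (F : nat -> nat -> pt) (i j k : nat) : pt -> Prop :=
  match k with
  | 0 => face F i j
  | 1 => face F i.-1 j
  | 2 => face F i.-1 j.-1
  | _ => face F i j.-1
  end.

(* convex 4-hedral angle with edge directions d1, d2, d3, d4 (in cyclic order,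
   flat angles between consecutive ones): each face plane span(d_k, d_{k+1})
   has the two remaining edges strictly on one and the same side. *)
Definition convex4 (d1 d2 d3 d4 : pt) : Prop :=
  0 < det3 d1 d2 d3 * det3 d1 d2 d4 /\
  0 < det3 d2 d3 d4 * det3 d2 d3 d1 /\
  0 < det3 d3 d4 d1 * det3 d3 d4 d2 /\
  0 < det3 d4 d1 d2 * det3 d4 d1 d3.

(* admissible: the isotropic line through the vertex meets the interior
   {V + sum l_k d_k | l_k > 0} of the angle *)
Definition admissible4 (d1 d2 d3 d4 : pt) : Prop :=
  exists l1 l2 l3 l4 : R, 0 < l1 /\ 0 < l2 /\ 0 < l3 /\ 0 < l4 /\
    let w := padd (padd (pscale l1 d1) (pscale l2 d2))
                  (padd (pscale l3 d3) (pscale l4 d4)) in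
    px w = 0 /\ py w = 0.

Definition same_set (p q : pt -> Prop) : Prop := forall P, p P <-> q P.

Definition dual_convex (m n : nat) (F : nat -> nat -> pt) : Prop :=
  (2 <= m)%N /\ (2 <= n)%N /\ net m n F /\
  forall i j, nonboundary m n i j ->
    exists d1 d2 d3 d4 : pt,
      convex4 d1 d2 d3 d4 /\ admissible4 d1 d2 d3 d4 /\
      same_set (aspan (F i j) d1 d2) (vface F i j 0) /\
      same_set (aspan (F i j) d2 d3) (vface F i j 1) /\
      same_set (aspan (F i j) d3 d4) (vface F i j 2) /\
      same_set (aspan (F i j) d4 d1) (vface F i j 3).

(* r is the opposite ratio for consecutive faces p1..p4 with p1 /\ p4 = e:
   p is the plane spanned by the lines p1 /\ p3 and p2 /\ p4. *)
Definition opp_ratio (p1 p2 p3 p4 : pt -> Prop) (r : R) : Prop :=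
  exists p : pt -> Prop,
    is_plane p /\
    (forall P, (p1 P /\ p3 P) \/ (p2 P /\ p4 P) -> p P) /\
    r = iang p1 p / iang p3 p * (iang p4 p / iang p2 p).

(* opposite ratio of vertex (i,j) w.r.t. the edge in direction e:
   e = 0 : to (i+1,j), 1 : to (i,j+1), 2 : to (i-1,j), 3 : to (i,j-1).
   The edge in direction e lies on vface e and vface (e-1 mod 4), so
   p1 = vface e, p2 = vface (e+1), p3 = vface (e+2), p4 = vface (e+3). *)
Definition vopp_ratio (F : nat -> nat -> pt) (i j e : nat) (r : R) : Prop :=
  opp_ratio (vface F i j (e %% 4)) (vface F i j (e.+1 %% 4))
            (vface F i j (e.+2 %% 4)) (vface F i j (e.+3 %% 4)) r.

Definition equal_opp_ratios (m n : nat) (F : nat -> nat -> pt) : Prop :=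
  (forall i j, nonboundary m n i j -> nonboundary m n i.+1 j ->
     exists r, vopp_ratio F i j 0 r /\ vopp_ratio F i.+1 j 2 r) /\
  (forall i j, nonboundary m n i j -> nonboundary m n i j.+1 ->
     exists r, vopp_ratio F i j 1 r /\ vopp_ratio F i j.+1 3 r).

Definition det2 (u v : R * R) : R := u.1 * v.2 - u.2 * v.1.

Definition gauss (F : nat -> nat -> pt) (i j k : nat) : R * R :=
  top (dual_pl (vface F i j k)).

Definition area4 (a b c d : R * R) : R :=
  (det2 a b + det2 b c + det2 c d + det2 d a) / 2.

(* mixed area: d/dt Area(a + t a', ..., d + t d') at t = 0, written out
   (Area(. + t .) is a polynomial of degree 2 in t; this is its linear coefficient) *)
Definition mixed4 (a b c d a' b' c' d' : R * R) : R :=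
  ((det2 a b' + det2 a' b) + (det2 b c' + det2 b' c) +
   (det2 c d' + det2 c' d) + (det2 d a' + det2 d' a)) / 2.

Definition curv (F : nat -> nat -> pt) (i j : nat) : R :=
  area4 (gauss F i j 0) (gauss F i j 1) (gauss F i j 2) (gauss F i j 3).

Definition mixed_curv (F G : nat -> nat -> pt) (i j : nat) : R :=
  mixed4 (gauss F i j 0) (gauss F i j 1) (gauss F i j 2) (gauss F i j 3)
         (gauss G i j 0) (gauss G i j 1) (gauss G i j 2) (gauss G i j 3).

Definition v_parallel (m n : nat) (F G : nat -> nat -> pt) : Prop :=
  forall i j, (i <= m)%N -> (j <= n)%N -> top (F i j) = top (G i j).

End IsotropicNets.

(* Every face of the net lies on a non-vertical plane, so it is described by its slope
   [g] (the top view of its dual point) and the four faces around a vertex give a slope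
   quadrilateral [g0 g1 g2 g3]; admissibility of the vertex cones makes it strictly
   convex.  The plane through the lines [p1 ∩ p3] and [p2 ∩ p4] has as slope the
   intersection of the diagonals, so the opposite ratio along an edge is a rational
   function of the turning determinants [q1..q4] of the quadrilateral.
   Faces of a v-parallel net meet along edges with the same top view, hence its slope
   quadrilateral [h] satisfies [h_(k+1) - h_k = mu_k (g_(k+1) - g_k)], and "opposite
   curvature, vanishing mixed curvature" is equivalent to explicit values of the [mu_k]:
   [mu_k ^ 2] is the inverse opposite ratio of the k-th edge.  So a parallel net forces equal
   opposite ratios at both ends of an edge; conversely, equal opposite ratios define [mu]
   consistently on every edge, and integrating first the slopes and then the heights
   along the net produces the parallel net. *)

From HB Require Import structures.
From mathcomp Require Import all_boot all_order all_algebra.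
From mathcomp Require Import reals.
From mathcomp Require Import ring lra zify.
From Stdlib Require Import ClassicalEpsilon.
Import Order.TTheory GRing.Theory Num.Theory.
Local Open Scope ring_scope.
Set Implicit Arguments. Unset Strict Implicit. Unset Printing Implicit Defensive.

Section PlaneVectors.
Variable R : realType.
Implicit Types (a b e t w x : R * R) (k : R).

Definition sub2 a b : R * R := (a.1 - b.1, a.2 - b.2).
Definition add2 a b : R * R := (a.1 + b.1, a.2 + b.2).
Definition scale2 k a : R * R := (k * a.1, k * a.2).
Definition dot2 a b : R := a.1 * b.1 + a.2 * b.2.
Definition perp2 a : R * R := (- a.2, a.1).
Definition sqnorm2 a : R := dot2 a a.

Lemma det2_neq0_sqnorm2 a b : det2 a b != 0 -> sqnorm2 a != 0 /\ sqnorm2 b != 0.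
Proof.
have sq0 x : sqnorm2 x = 0 -> x = (0, 0).
  case: x => x1 x2; rewrite /sqnorm2 /dot2 /= => /eqP.
  rewrite paddr_eq0 -?expr2 ?sqr_ge0 // !sqrf_eq0 => /andP [/eqP -> /eqP ->] //.
move=> h; split; apply/eqP => /sq0 e; move: h;
  by rewrite e /det2 /= !(mul0r, mulr0) subrr eqxx.
Qed.

Lemma sqnorm2_gt0 a : sqnorm2 a != 0 -> 0 < sqnorm2 a.
Proof. by rewrite /sqnorm2 /dot2 lt0r => ->; nra. Qed.

Lemma orthogonal_perp2 e t : sqnorm2 t != 0 -> dot2 e t = 0 ->
  e = scale2 (det2 t e / sqnorm2 t) (perp2 t).
Proof.
case: e t => [e1 e2] [t1 t2]; rewrite /sqnorm2 /dot2 /det2 /scale2 /perp2 /= => h he.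
have -> : e1 = (e1 * (t1 * t1 + t2 * t2)) / (t1 * t1 + t2 * t2) by field.
have -> : e2 = (e2 * (t1 * t1 + t2 * t2)) / (t1 * t1 + t2 * t2) by field.
have E1 : e1 * (t1 * t1 + t2 * t2) = t1 * (e1 * t1 + e2 * t2) - t2 * (t1 * e2 - t2 * e1) by ring.
have E2 : e2 * (t1 * t1 + t2 * t2) = t2 * (e1 * t1 + e2 * t2) + t1 * (t1 * e2 - t2 * e1) by ring.
by rewrite E1 E2 he /=; congr pair; field.
Qed.

Lemma orthogonal_parallel e e' t : sqnorm2 t != 0 -> sqnorm2 e != 0 ->
  dot2 e t = 0 -> dot2 e' t = 0 -> exists k, e' = scale2 k e.
Proof.
move=> ht he /(orthogonal_perp2 ht) pe /(orthogonal_perp2 ht) pe'.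
move: pe pe'; set a := det2 t e / _; set b := det2 t e' / _ => pe pe'.
have a0 : a != 0 by apply: contraNneq he => a0; rewrite pe a0 /sqnorm2 /dot2 /=; apply/eqP; ring.
by exists (b / a); rewrite pe' pe /scale2 /=; congr pair; field.
Qed.

Lemma parallel_orthogonal a b w : sqnorm2 a != 0 ->
  det2 a b = 0 -> dot2 a w = 0 -> dot2 b w = 0.
Proof.
move=> ha hab haw.
have : sqnorm2 a * dot2 b w = dot2 a b * dot2 a w + det2 a b * det2 a w.
  by rewrite /sqnorm2 /dot2 /det2; ring.
by rewrite hab haw mulr0 mul0r addr0 => /eqP; rewrite mulf_eq0 (negbTE ha) => /eqP.
Qed.

Lemma det2_eq0_indep a b x : det2 a b != 0 -> det2 a x = 0 -> det2 b x = 0 -> x = (0, 0).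
Proof.
case: a b x => [a1 a2] [b1 b2] [x1 x2]; rewrite /det2 /= => h hax hbx.
have e1 : (a1 * b2 - a2 * b1) * x1 = b1 * (a1 * x2 - a2 * x1) - a1 * (b1 * x2 - b2 * x1) by ring.
have e2 : (a1 * b2 - a2 * b1) * x2 = b2 * (a1 * x2 - a2 * x1) - a2 * (b1 * x2 - b2 * x1) by ring.
rewrite hax hbx !mulr0 subrr in e1 e2.
move: e1 e2 => /eqP; rewrite mulf_eq0 (negbTE h) => /eqP ->.
by move/eqP; rewrite mulf_eq0 (negbTE h) => /eqP ->.
Qed.

Lemma scale2I e k k' : sqnorm2 e != 0 -> scale2 k e = scale2 k' e -> k = k'.
Proof.
case: e => e1 e2; rewrite /sqnorm2 /dot2 /scale2 /= => he [E1 E2].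
have : (k - k') * (e1 * e1 + e2 * e2) = (k * e1 - k' * e1) * e1 + (k * e2 - k' * e2) * e2 by ring.
rewrite E1 E2 !subrr !mul0r addr0.
by move/eqP; rewrite mulf_eq0 (negbTE he) orbF subr_eq0 => /eqP.
Qed.

Lemma sub2_scale2C x y a b k : sub2 x y = scale2 k (sub2 a b) -> sub2 y x = scale2 k (sub2 b a).
Proof. by rewrite /sub2 /scale2 /= => -[e1 e2]; congr pair; lra. Qed.

Lemma sub2_scale2E h h' x k : sub2 h h' = scale2 k x ->
  h.1 = h'.1 + k * x.1 /\ h.2 = h'.2 + k * x.2.
Proof. by rewrite /sub2 /scale2 /= => -[e1 e2]; split; lra. Qed.

Lemma sub2_add2 (a s : R * R) : sub2 (add2 a s) a = s.
Proof. by case: a s => [a1 a2] [s1 s2]; rewrite /sub2 /add2 /=; congr pair; ring. Qed.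

Lemma inorm2_scale2 k a : inorm2 (scale2 k a) = `|k| * inorm2 a.
Proof.
rewrite /inorm2 /= -sqrtr_sqr -sqrtrM ?sqr_ge0 //; congr Num.sqrt; ring.
Qed.

Lemma inorm2_gt0 a : sqnorm2 a != 0 -> 0 < inorm2 a.
Proof.
by move=> /sqnorm2_gt0; rewrite /inorm2 sqrtr_gt0 /sqnorm2 /dot2 !expr2.
Qed.

End PlaneVectors.

Section Signs.
Variable R : realType.
Implicit Types (x y s : R).

Definition same_sign4 (x1 x2 x3 x4 : R) : Prop :=
  exists s, [/\ 0 < x1 * s, 0 < x2 * s, 0 < x3 * s & 0 < x4 * s].

Lemma mulr_gt0_neq0 x y : 0 < x * y -> x != 0 /\ y != 0.
Proof. by move=> h; split; apply/eqP => e; rewrite e ?mul0r ?mulr0 ltxx in h. Qed.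

Lemma same_sign_mul x y s : 0 < x * s -> 0 < y * s -> 0 < x * y.
Proof. by move=> hx hy; nra. Qed.

Lemma same_sign_div x y s : 0 < x * s -> 0 < y * s -> 0 < x / y.
Proof.
move=> hx hy; have hxy := same_sign_mul hx hy; have [_ y0] := mulr_gt0_neq0 hxy.
have -> : x / y = x * y / y ^+ 2 by field.
by rewrite divr_gt0 // lt0r sqrf_eq0 y0 sqr_ge0.
Qed.

End Signs.

Section GraphPlanes.
Variable R : realType.
Implicit Types (u v w d A P Q V : pt R) (g : R * R) (p : pt R -> Prop).

Definition topdet u v : R := det2 (top u) (top v).

Definition slope u v : R * R :=
  ((pz u * py v - pz v * py u) / topdet u v, (px u * pz v - px v * pz u) / topdet u v).

Definition rise g P : R := dot2 g (top P).

Definition on_plane g A P : Prop := pz P = pz A + rise g (psub P A).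

Lemma pt_ext P Q : px P = px Q -> py P = py Q -> pz P = pz Q -> P = Q.
Proof. by case: P Q => ? ? ? [? ? ?] /= -> -> ->. Qed.

Lemma slope_spec u v : topdet u v != 0 ->
  pz u = rise (slope u v) u /\ pz v = rise (slope u v) v.
Proof. by rewrite /rise /slope /topdet /det2 /dot2 /= => h; split; field. Qed.

Lemma slope_unique u v g : topdet u v != 0 ->
  pz u = rise g u -> pz v = rise g v -> slope u v = g.
Proof.
by case: g => a b; rewrite /slope /topdet /rise /det2 /dot2 /= => h -> ->; congr pair; field.
Qed.

Lemma aspan_np_slope A u v g : topdet u v != 0 -> pz u = rise g u -> pz v = rise g v ->
  is_np (aspan A u v) g.1 g.2 (pz A - rise g A).
Proof.
move=> h hu hv P; split.
- by case=> a [b ->]; rewrite /= hu hv /rise /dot2 /=; ring.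
- move: h; rewrite /topdet /det2 /= => h hP.
  exists ((px (psub P A) * py v - py (psub P A) * px v) / (px u * py v - py u * px v)).
  exists ((px u * py (psub P A) - py u * px (psub P A)) / (px u * py v - py u * px v)).
  apply: pt_ext => /=; rewrite ?hP ?hu ?hv /rise /dot2 /=; field; exact: h.
Qed.

Lemma aspan_np A u v : topdet u v != 0 ->
  is_np (aspan A u v) (slope u v).1 (slope u v).2 (pz A - rise (slope u v) A).
Proof. by move=> h; have [hu hv] := slope_spec h; apply: aspan_np_slope. Qed.

Lemma is_np_unique p a b c a' b' c' :
  is_np p a b c -> is_np p a' b' c' -> [/\ a = a', b = b' & c = c'].
Proof.
move=> h h'.
have E x y : a * x + b * y + c = a' * x + b' * y + c'.
  by apply: (h' (Pt x y _)).1; apply/(h (Pt x y _)).2.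
have ec : c = c' by have := E 0 0; rewrite !mulr0 !add0r.
have ea : a = a' by have := E 1 0; rewrite !mulr1 !mulr0 !addr0 ec => /addIr.
by have := E 0 1; rewrite !mulr1 !mulr0 !add0r ec => /addIr.
Qed.

Lemma top_dual_pl p a b c : is_np p a b c -> top (dual_pl p) = (a, b).
Proof.
move=> h; rewrite /dual_pl /top /=; set t := epsilon _ _.
have ht : is_np p t.1.1 t.1.2 t.2.
  by apply: (epsilon_spec _ (fun t : R * R * R => is_np p t.1.1 t.1.2 t.2)); exists (a, b, c).
by have [-> -> _] := is_np_unique ht h.
Qed.

Lemma top_dual_aspan A u v : topdet u v != 0 -> top (dual_pl (aspan A u v)) = slope u v.
Proof. by move=> h; rewrite (top_dual_pl (aspan_np A h)); case: (slope u v). Qed.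

Lemma aspan_on_plane A u v P : topdet u v != 0 -> aspan A u v P <-> on_plane (slope u v) A P.
Proof. by move=> h; rewrite (aspan_np A h P) /on_plane /rise /dot2 /=; split => ->; ring. Qed.

Lemma on_plane_sub g A P Q : on_plane g A P -> on_plane g A Q ->
  pz (psub Q P) = rise g (psub Q P).
Proof. by rewrite /on_plane /rise /dot2 /= => -> ->; ring. Qed.

Lemma slopes_orthogonal g g' d : pz d = rise g d -> pz d = rise g' d ->
  dot2 (sub2 g' g) (top d) = 0.
Proof.
rewrite /rise /dot2 /sub2 /= => e e'.
have -> : (g'.1 - g.1) * px d + (g'.2 - g.2) * py d =
          (g'.1 * px d + g'.2 * py d) - (g.1 * px d + g.2 * py d) by ring.
by rewrite -e -e' subrr.
Qed.

Lemma edge_orthogonal (g g' : R * R) A A' P Q :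
  on_plane g A P -> on_plane g A Q -> on_plane g' A' P -> on_plane g' A' Q ->
  dot2 (sub2 g' g) (top (psub Q P)) = 0.
Proof. by move=> h1 h2 h3 h4; apply: slopes_orthogonal (on_plane_sub h1 h2) (on_plane_sub h3 h4).
Qed.

Lemma rise_parallel g g' a b k P : sub2 g' g = scale2 k (sub2 a b) ->
  dot2 (sub2 a b) (top P) = 0 -> rise g' P = rise g P.
Proof.
move=> /sub2_scale2E [e1 e2]; rewrite /rise /dot2 /= e1 e2 /sub2 /= => h.
by rewrite -[RHS]addr0 -(mulr0 k) -h; ring.
Qed.

Lemma det3_slope u v w g : pz u = rise g u -> pz v = rise g v ->
  det3 u v w = topdet u v * (pz w - rise g w).
Proof. by rewrite /det3 /dot /cross /topdet /rise /det2 /dot2 /= => -> ->; ring. Qed.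

Lemma aspan_topdet3 A u v P0 P1 P2 : aspan A u v P0 -> aspan A u v P1 -> aspan A u v P2 ->
  exists k, det2 (top (psub P1 P0)) (top (psub P2 P0)) = k * topdet u v.
Proof.
move=> [x0 [y0 ->]] [x1 [y1 ->]] [x2 [y2 ->]].
by exists ((x1 - x0) * (y2 - y0) - (y1 - y0) * (x2 - x0)); rewrite /topdet /det2 /=; ring.
Qed.

Lemma same_set_topdet V d d' A u v : same_set (aspan V d d') (aspan A u v) ->
  topdet d d' != 0 -> topdet u v != 0.
Proof.
move=> hs; pose P a b := padd V (padd (pscale a d) (pscale b d')).
have hP a b : aspan A u v (P a b) by apply/hs; exists a, b.
have [k hk] := aspan_topdet3 (hP 0 0) (hP 1 0) (hP 0 1).
have -> : topdet d d' = k * topdet u v by rewrite -hk /topdet /det2 /=; ring.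
by apply: contraNneq => ->; rewrite mulr0.
Qed.

Lemma same_set_slope V d d' p g A : same_set (aspan V d d') p ->
  (forall P, p P <-> on_plane g A P) -> pz d = rise g d /\ pz d' = rise g d'.
Proof.
move=> hs hp.
have mem a b : on_plane g A (padd V (padd (pscale a d) (pscale b d'))).
  by apply/hp/hs; exists a, b.
have e1 := on_plane_sub (mem 0 0) (mem 1 0); have e2 := on_plane_sub (mem 0 0) (mem 0 1).
by move: e1 e2; rewrite /rise /dot2 /= => e1 e2; split; lra.
Qed.

End GraphPlanes.

Section GaussQuad.
Variable R : realType.
Implicit Types (u v w : pt R) (a b g : R * R).

Definition turn2 a b (c : R * R) : R := det2 (sub2 b a) (sub2 c b).

Definition convex_quad2 g0 g1 g2 g3 : Prop :=
  same_sign4 (turn2 g0 g1 g2) (turn2 g1 g2 g3) (turn2 g2 g3 g0) (turn2 g3 g0 g1).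

Lemma det3_cycle u v w : det3 u v w = det3 v w u.
Proof. by rewrite /det3 /dot /cross /=; ring. Qed.

Lemma convex4_same_sign (d1 d2 d3 d4 : pt R) : convex4 d1 d2 d3 d4 ->
  same_sign4 (det3 d1 d2 d3) (det3 d2 d3 d4) (det3 d3 d4 d1) (det3 d4 d1 d2).
Proof.
rewrite /convex4 -(det3_cycle d4 d1 d2) -(det3_cycle d1 d2 d3).
rewrite -(det3_cycle d2 d3 d4) -(det3_cycle d3 d4 d1).
move=> [h1 [h2 [h3 h4]]]; exists (det3 d1 d2 d3); split.
- by rewrite -expr2 lt0r sqr_ge0 sqrf_eq0 andbT; have [] := mulr_gt0_neq0 h1.
- by [].
- by apply: (same_sign_mul (s := det3 d2 d3 d4)); rewrite // mulrC.
- by rewrite mulrC.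
Qed.

Lemma admissible4_topdet_same_sign (d1 d2 d3 d4 : pt R) :
  convex4 d1 d2 d3 d4 -> admissible4 d1 d2 d3 d4 ->
  same_sign4 (topdet d1 d2) (topdet d2 d3) (topdet d3 d4) (topdet d4 d1).
Proof.
move=> hc [l1 [l2 [l3 [l4 [l1p [l2p [l3p [l4p]]]]]]]].
set w := padd _ _ => /= [[wx wy]].
have [s [D1s D2s D3s D4s]] := convex4_same_sign hc.
(* [w] is vertical and lies inside the cone. *)
have vert u v : det3 u v w = topdet u v * pz w.
  by move: wx wy; rewrite /w /det3 /dot /cross /topdet /det2 /= => -> ->; ring.
have c1 : topdet d1 d2 * pz w = l3 * det3 d1 d2 d3 + l4 * det3 d4 d1 d2.
  by rewrite -vert /w /det3 /dot /cross /=; ring.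
have c2 : topdet d2 d3 * pz w = l4 * det3 d2 d3 d4 + l1 * det3 d1 d2 d3.
  by rewrite -vert /w /det3 /dot /cross /=; ring.
have c3 : topdet d3 d4 * pz w = l1 * det3 d3 d4 d1 + l2 * det3 d2 d3 d4.
  by rewrite -vert /w /det3 /dot /cross /=; ring.
have c4 : topdet d4 d1 * pz w = l2 * det3 d4 d1 d2 + l3 * det3 d3 d4 d1.
  by rewrite -vert /w /det3 /dot /cross /=; ring.
exists (pz w * s); rewrite !mulrA c1 c2 c3 c4 !mulrDl -!mulrA.
by split; apply: addr_gt0; apply: mulr_gt0.
Qed.

Lemma same_sign4_turns (c1 c2 c3 c4 m1 m2 m3 m4 : R) :
  same_sign4 c1 c2 c3 c4 ->
  same_sign4 (c1 * m1 * c2) (c2 * m2 * c3) (c3 * m3 * c4) (c4 * m4 * c1) ->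
  same_sign4 (m1 * m2 * c2) (m2 * m3 * c3) (m3 * m4 * c4) (m4 * m1 * c1).
Proof.
move=> [s [c1s c2s c3s c4s]] [t [D1t D2t D3t D4t]].
have pos (ma mb ca cb cc : R) : 0 < ca * s -> 0 < cb * s -> 0 < cc * s ->
    0 < ca * ma * cb * t -> 0 < cb * mb * cc * t -> 0 < ma * mb * cb * s.
  move=> has hbs hcs hDa hDb.
  have P : 0 < (ma * mb) * (ca * cc * (cb * t) ^+ 2).
    rewrite (_ : _ * _ = (ca * ma * cb * t) * (cb * mb * cc * t)); last by ring.
    exact: mulr_gt0.
  have Q : 0 < ca * cc * (cb * t) ^+ 2.
    rewrite lt0r (mulr_gt0_neq0 P).2 mulr_ge0 ?sqr_ge0 //.
    exact/ltW/(same_sign_mul has hcs).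
  by rewrite -mulrA mulr_gt0 // -(pmulr_lgt0 _ Q).
by exists s; split; [apply: (pos _ _ c1 _ c3) | apply: (pos _ _ c2 _ c4)
  | apply: (pos _ _ c3 _ c1) | apply: (pos _ _ c4 _ c2)].
Qed.

Lemma det3_edge u v w g g' k : pz u = rise g u -> pz v = rise g v -> pz w = rise g' w ->
  sub2 g' g = scale2 k (perp2 (top v)) -> det3 u v w = topdet u v * k * topdet v w.
Proof.
move=> hu hv hw /sub2_scale2E [e1 e2].
rewrite (det3_slope w hu hv) hw /rise /dot2 /topdet /det2 /perp2 /= e1 e2 /=; ring.
Qed.

Lemma turn2_edges g0 g1 g2 a b k k' : sub2 g1 g0 = scale2 k (perp2 a) ->
  sub2 g2 g1 = scale2 k' (perp2 b) -> turn2 g0 g1 g2 = k * k' * det2 a b.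
Proof. by rewrite /turn2 => -> ->; rewrite /det2 /scale2 /perp2 /=; ring. Qed.

Lemma gauss_quad_convex (d1 d2 d3 d4 : pt R) g0 g1 g2 g3 :
  convex4 d1 d2 d3 d4 -> admissible4 d1 d2 d3 d4 ->
  pz d1 = rise g0 d1 -> pz d2 = rise g0 d2 -> pz d2 = rise g1 d2 -> pz d3 = rise g1 d3 ->
  pz d3 = rise g2 d3 -> pz d4 = rise g2 d4 -> pz d4 = rise g3 d4 -> pz d1 = rise g3 d1 ->
  convex_quad2 g0 g1 g2 g3.
Proof.
(* Consecutive slopes differ by [k_i] times the normal of the common edge [d_i]; then both
   the [det3] of consecutive edges and the turns of the slope quadrilateral are products
   of the [k_i] and of the [topdet] of consecutive edges. *)
move=> hc ha z01 z02 z12 z13 z23 z24 z34 z31.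
have hcs := admissible4_topdet_same_sign hc ha.
have [s [/mulr_gt0_neq0 [c1 _] /mulr_gt0_neq0 [c2 _] /mulr_gt0_neq0 [c3 _]
         /mulr_gt0_neq0 [c4 _]]] := hcs.
have edge g g' u v : topdet u v != 0 -> pz v = rise g v -> pz v = rise g' v ->
    exists k, sub2 g' g = scale2 k (perp2 (top v)).
  move=> /det2_neq0_sqnorm2 [_ hv] e e'.
  by eexists; apply: orthogonal_perp2 hv (slopes_orthogonal e e').
have [k1 e1] := edge g0 g1 d1 d2 c1 z02 z12.
have [k2 e2] := edge g1 g2 d2 d3 c2 z13 z23.
have [k3 e3] := edge g2 g3 d3 d4 c3 z24 z34.
have [k4 e4] := edge g3 g0 d4 d1 c4 z31 z01.
rewrite /convex_quad2 (turn2_edges e1 e2) (turn2_edges e2 e3) (turn2_edges e3 e4).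
rewrite (turn2_edges e4 e1); apply: same_sign4_turns hcs _.
rewrite -(det3_edge z01 z02 z13 e1) -(det3_edge z12 z13 z24 e2).
rewrite -(det3_edge z23 z24 z31 e3) -(det3_edge z34 z31 z02 e4).
exact: convex4_same_sign hc.
Qed.

End GaussQuad.

Section NetFaces.
Variable R : realType.
Implicit Types (F : nat -> nat -> pt R) (P : pt R).

Definition face_slope F i j : R * R :=
  slope (psub (F i.+1 j) (F i j)) (psub (F i j.+1) (F i j)).

Definition face_regular F i j : Prop :=
  topdet (psub (F i.+1 j) (F i j)) (psub (F i j.+1) (F i j)) != 0.

Lemma face_on_plane F i j : convex_quad (F i j) (F i.+1 j) (F i.+1 j.+1) (F i j.+1) ->
  face_regular F i j ->
  [/\ on_plane (face_slope F i j) (F i j) (F i j),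
      on_plane (face_slope F i j) (F i j) (F i.+1 j),
      on_plane (face_slope F i j) (F i j) (F i.+1 j.+1) &
      on_plane (face_slope F i j) (F i j) (F i j.+1)].
Proof.
move=> [hc _] h; have [hu hv] := slope_spec h.
rewrite /on_plane /face_slope; split.
- by rewrite /rise /dot2 /=; ring.
- by rewrite -hu /=; ring.
- have := det3_slope (psub (F i.+1 j.+1) (F i j)) hu hv.
  rewrite det3_cycle (_ : det3 _ _ _ = - det3 (psub (F i.+1 j) (F i j))
                        (psub (F i.+1 j.+1) (F i j)) (psub (F i j.+1) (F i j))).
    rewrite hc oppr0 => /esym /eqP; rewrite mulf_eq0 (negbTE h) subr_eq0 => /eqP <- /=.
    by ring.
  by rewrite /det3 /dot /cross /=; ring.
- by rewrite -hv /=; ring.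
Qed.

Lemma face_np F i j : face_regular F i j ->
  is_np (face F i j) (face_slope F i j).1 (face_slope F i j).2
        (pz (F i j) - rise (face_slope F i j) (F i j)).
Proof. exact: aspan_np. Qed.

Lemma top_dual_face F i j : face_regular F i j -> top (dual_pl (face F i j)) = face_slope F i j.
Proof. exact: top_dual_aspan. Qed.

Lemma face_mem F i j P : face_regular F i j ->
  on_plane (face_slope F i j) (F i j) P -> face F i j P.
Proof. by move=> h /(aspan_on_plane _ _ h). Qed.

(* Faces around the vertex (i.+1, j.+1), numbered cyclically as in [vface]. *)
Definition gauss_slope F i j k : R * R :=
  match (k %% 4)%N with
  | 0 => face_slope F i.+1 j.+1
  | 1 => face_slope F i j.+1
  | 2 => face_slope F i j
  | _ => face_slope F i.+1 j
  end.

Definition gauss_convex F i j : Prop :=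
  convex_quad2 (gauss_slope F i j 0) (gauss_slope F i j 1)
               (gauss_slope F i j 2) (gauss_slope F i j 3).

Lemma dual_convex_vertex m n F i j : dual_convex m n F -> nonboundary m n i.+1 j.+1 ->
  [/\ face_regular F i.+1 j.+1, face_regular F i j.+1, face_regular F i j,
      face_regular F i.+1 j & gauss_convex F i j].
Proof.
move=> [_ [_ [_ hdc]]] /hdc [d1 [d2 [d3 [d4 [hc [ha [s0 [s1 [s2 s3]]]]]]]]].
have [s [/mulr_gt0_neq0 [c1 _] /mulr_gt0_neq0 [c2 _] /mulr_gt0_neq0 [c3 _]
         /mulr_gt0_neq0 [c4 _]]] := admissible4_topdet_same_sign hc ha.
have f0 : face_regular F i.+1 j.+1 := same_set_topdet s0 c1.
have f1 : face_regular F i j.+1 := same_set_topdet s1 c2.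
have f2 : face_regular F i j := same_set_topdet s2 c3.
have f3 : face_regular F i.+1 j := same_set_topdet s3 c4.
split => //.
have [z01 z02] := same_set_slope s0 (fun P => aspan_on_plane _ P f0).
have [z12 z13] := same_set_slope s1 (fun P => aspan_on_plane _ P f1).
have [z23 z24] := same_set_slope s2 (fun P => aspan_on_plane _ P f2).
have [z34 z31] := same_set_slope s3 (fun P => aspan_on_plane _ P f3).
exact: gauss_quad_convex hc ha z01 z02 z12 z13 z23 z24 z34 z31.
Qed.

Lemma dual_convex_face_regular m n F i j : dual_convex m n F -> (i < m)%N -> (j < n)%N ->
  face_regular F i j.
Proof.
move=> hd hi hj; have [hm [hn _]] := hd.
have vertex a b : (a < m.-1)%N -> (b < n.-1)%N ->
    [/\ face_regular F a.+1 b.+1, face_regular F a b.+1, face_regular F a b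
      & face_regular F a.+1 b].
  move=> ha hb; have nb : nonboundary m n a.+1 b.+1 by rewrite /nonboundary; lia.
  by have [] := dual_convex_vertex hd nb.
case: i hi => [|i] hi; case: j hj => [|j] hj.
- by have [] := vertex 0 0 ltac:(lia) ltac:(lia).
- by have [] := vertex 0 j ltac:(lia) ltac:(lia).
- by have [] := vertex i 0 ltac:(lia) ltac:(lia).
- by have [] := vertex i j ltac:(lia) ltac:(lia).
Qed.

End NetFaces.

Section OppositeRatio.
Variable R : realType.
Implicit Types (p q : pt R -> Prop) (P Q V : pt R) (a g : R * R).

Lemma iang_np p q G M c c' : is_np p G.1 G.2 c -> is_np q M.1 M.2 c' ->
  iang p q = inorm2 (sub2 G M).
Proof. by move=> hp hq; rewrite /iang (top_dual_pl hp) (top_dual_pl hq). Qed.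

Lemma np_sub p G c P Q : is_np p G.1 G.2 c -> p P -> p Q -> pz (psub Q P) = rise G (psub Q P).
Proof. by move=> h /(h P).1 eP /(h Q).1 eQ; rewrite /= eP eQ /rise /dot2 /=; ring. Qed.

Lemma np_shift p G c V a : is_np p G.1 G.2 c -> p V ->
  p (Pt (px V + a.1) (py V + a.2) (pz V + dot2 G a)).
Proof. by move=> h /(h V).1 eV; apply/(h _).2; rewrite /= eV /dot2; ring. Qed.

Lemma on_plane_np g V : is_np (on_plane g V) g.1 g.2 (pz V - rise g V).
Proof. by move=> P; rewrite /on_plane /rise /dot2 /=; split => ->; ring. Qed.

Lemma on_plane_is_plane g V : is_plane (on_plane g V).
Proof.
have h : topdet (Pt 1 0 g.1) (Pt 0 1 g.2) != 0.
  by rewrite /topdet /det2 /= mulr1 mulr0 subr0 oner_eq0.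
exists V, (Pt 1 0 g.1), (Pt 0 1 g.2); split.
  by case; rewrite !(mulr0, mul0r, mulr1) subr0 => _ _ /eqP; rewrite oner_eq0.
move=> P; rewrite (aspan_np_slope V h (g := g)) ?(on_plane_np g V P) //.
  by rewrite /rise /dot2 /=; ring.
by rewrite /rise /dot2 /=; ring.
Qed.

Lemma is_plane_np p V P1 P2 : is_plane p -> p V -> p P1 -> p P2 ->
  det2 (top (psub P1 V)) (top (psub P2 V)) != 0 -> exists m c, is_np p m.1 m.2 c.
Proof.
move=> [A [u [v [_ hp]]]] /hp hV /hp hP1 /hp hP2 hd.
have [k hk] := aspan_topdet3 hV hP1 hP2.
have huv : topdet u v != 0 by apply: contraNneq hd => e; rewrite hk e mulr0.
by exists (slope u v), (pz A - rise (slope u v) A) => P; rewrite hp; apply: aspan_np.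
Qed.

Lemma meet_on_plane pa pb Ga Gb M ca cb V P :
  is_np pa Ga.1 Ga.2 ca -> is_np pb Gb.1 Gb.2 cb -> pa V -> pb V -> pa P -> pb P ->
  det2 (sub2 Gb Ga) (sub2 M Ga) = 0 -> sqnorm2 (sub2 Gb Ga) != 0 -> on_plane M V P.
Proof.
move=> ha hb aV bV aP bP hM hn.
have ea := np_sub ha aV aP; have eb := np_sub hb bV bP.
have := parallel_orthogonal hn hM (slopes_orthogonal ea eb).
by move: ea; rewrite /on_plane /rise /dot2 /= => ea hw; lra.
Qed.

Lemma opp_plane_slope p p1 p2 p3 p4 G1 G2 G3 G4 M c1 c2 c3 c4 V :
  is_np p1 G1.1 G1.2 c1 -> is_np p2 G2.1 G2.2 c2 ->
  is_np p3 G3.1 G3.2 c3 -> is_np p4 G4.1 G4.2 c4 ->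
  p1 V -> p2 V -> p3 V -> p4 V ->
  det2 (sub2 G3 G1) (sub2 M G1) = 0 -> det2 (sub2 G4 G2) (sub2 M G2) = 0 ->
  det2 (sub2 G3 G1) (sub2 G4 G2) != 0 ->
  is_plane p -> (forall P, (p1 P /\ p3 P) \/ (p2 P /\ p4 P) -> p P) ->
  exists c, is_np p M.1 M.2 c.
Proof.
(* [P1] and [P2] lie on the lines [p1 ∩ p3] and [p2 ∩ p4] and have independent top views
   seen from [V]; so [p] is non-vertical and its slope lies on both diagonals. *)
move=> h1 h2 h3 h4 v1 v2 v3 v4 hM1 hM2 hdet hp hcont.
pose a := perp2 (sub2 G3 G1); pose b := perp2 (sub2 G4 G2).
pose P1 := Pt (px V + a.1) (py V + a.2) (pz V + dot2 G1 a).
pose P2 := Pt (px V + b.1) (py V + b.2) (pz V + dot2 G2 b).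
have ea : dot2 G3 a = dot2 G1 a by rewrite /dot2 /a /perp2 /sub2 /=; ring.
have eb : dot2 G4 b = dot2 G2 b by rewrite /dot2 /b /perp2 /sub2 /=; ring.
have pV : p V by apply: hcont; left.
have pP1 : p P1.
  apply: hcont; left; split; first exact: np_shift h1 v1.
  by rewrite /P1 -ea; exact: np_shift h3 v3.
have pP2 : p P2.
  apply: hcont; right; split; first exact: np_shift h2 v2.
  by rewrite /P2 -eb; exact: np_shift h4 v4.
have dab : det2 (top (psub P1 V)) (top (psub P2 V)) = det2 (sub2 G3 G1) (sub2 G4 G2).
  by rewrite /det2 /a /b /perp2 /sub2 /=; ring.
have hP12 : det2 (top (psub P1 V)) (top (psub P2 V)) != 0 by rewrite dab.
have [m [c hm]] := is_plane_np hp pV pP1 pP2 hP12.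
have diag Gk Gl e P : P = Pt (px V + e.1) (py V + e.2) (pz V + dot2 Gk e) ->
    e = perp2 (sub2 Gl Gk) -> p P -> det2 (sub2 Gl Gk) (sub2 M Gk) = 0 ->
    det2 (sub2 Gl Gk) (sub2 m M) = 0.
  move=> eP ee pP hMk.
  have hk : pz (psub P V) = rise Gk (psub P V) by rewrite eP /rise /dot2 /=; ring.
  have h := slopes_orthogonal hk (np_sub hm pV pP).
  have -> : det2 (sub2 Gl Gk) (sub2 m M) =
            dot2 (sub2 m Gk) (top (psub P V)) - det2 (sub2 Gl Gk) (sub2 M Gk).
    by rewrite eP ee /dot2 /det2 /sub2 /perp2 /=; ring.
  by rewrite h hMk subrr.
have := det2_eq0_indep hdet (diag _ _ _ _ erefl erefl pP1 hM1)
                            (diag _ _ _ _ erefl erefl pP2 hM2).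
by case=> /subr0_eq e1 /subr0_eq e2; exists c; rewrite -e1 -e2.
Qed.

Lemma opp_ratio_iff p1 p2 p3 p4 G1 G2 G3 G4 M c1 c2 c3 c4 V r :
  is_np p1 G1.1 G1.2 c1 -> is_np p2 G2.1 G2.2 c2 ->
  is_np p3 G3.1 G3.2 c3 -> is_np p4 G4.1 G4.2 c4 ->
  p1 V -> p2 V -> p3 V -> p4 V ->
  det2 (sub2 G3 G1) (sub2 M G1) = 0 -> det2 (sub2 G4 G2) (sub2 M G2) = 0 ->
  det2 (sub2 G3 G1) (sub2 G4 G2) != 0 ->
  (opp_ratio p1 p2 p3 p4 r <->
   r = inorm2 (sub2 G1 M) / inorm2 (sub2 G3 M) * (inorm2 (sub2 G4 M) / inorm2 (sub2 G2 M))).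
Proof.
move=> h1 h2 h3 h4 v1 v2 v3 v4 hM1 hM2 hdet; split.
- move=> [p [hp [hcont ->]]].
  have [c hc] := opp_plane_slope h1 h2 h3 h4 v1 v2 v3 v4 hM1 hM2 hdet hp hcont.
  by rewrite (iang_np h1 hc) (iang_np h2 hc) (iang_np h3 hc) (iang_np h4 hc).
- have [n13 n24] := det2_neq0_sqnorm2 hdet.
  move=> ->; exists (on_plane M V); split; first exact: on_plane_is_plane.
  split=> [P [[q1 q3] | [q2 q4]]|].
  + exact: meet_on_plane h1 h3 v1 v3 q1 q3 hM1 n13.
  + exact: meet_on_plane h2 h4 v2 v4 q2 q4 hM2 n24.
  + have hc := on_plane_np M V.
    by rewrite (iang_np h1 hc) (iang_np h2 hc) (iang_np h3 hc) (iang_np h4 hc).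
Qed.

End OppositeRatio.

Section FactorEquations.
Variable R : realType.
Variables q1 q2 q3 q4 k1 k2 k3 k4 : R.
Hypotheses (n1 : q1 != 0) (n2 : q2 != 0) (hsum : q1 + q3 = q2 + q4).

Lemma edge_factors_solve :
  (k1 - k4) * q1 = (k3 - k4) * q2 -> (k2 - k4) * q1 = - ((k3 - k4) * (q4 - q1)) ->
  (k1 * q4 + k2 * (q1 + q2) + k3 * q3 = 0 <->
   [/\ k1 = - k4 * q3 / q1, k2 = k4 * q3 * q4 / (q1 * q2) & k3 = - k4 * q4 / q2]).
Proof.
have -> : q3 = q2 + q4 - q1 by rewrite -hsum; ring.
move=> E1 E2; split=> [E3|[-> -> ->]]; last by field; rewrite n1 n2.
have B0 : (k1 - k4) * q1 - (k3 - k4) * q2 = 0 by rewrite E1 subrr.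
have C0 : (k2 - k4) * q1 + (k3 - k4) * (q4 - q1) = 0 by rewrite E2 addNr.
have K : k3 * q2 + k4 * q4 = 0.
  rewrite (_ : k3 * q2 + k4 * q4 = ((k1 * q4 + k2 * (q1 + q2) + k3 * (q2 + q4 - q1))
      - q4 * ((k1 - k4) * q1 - (k3 - k4) * q2) / q1
      - (q1 + q2) * ((k2 - k4) * q1 + (k3 - k4) * (q4 - q1)) / q1) / 2).
    by rewrite E3 B0 C0; ring.
  by field; rewrite n1.
have hk3 : k3 = - k4 * q4 / q2.
  by apply: (mulIf n2); rewrite mulfVK // -[LHS]subr0 -K; ring.
split=> //; apply: (mulIf n1).
- have -> : k1 * q1 = (k1 - k4) * q1 + k4 * q1 by ring.
  by rewrite E1 hk3; field; rewrite n1 n2.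
- have -> : k2 * q1 = (k2 - k4) * q1 + k4 * q1 by ring.
  by rewrite E2 hk3; field; rewrite n1 n2.
Qed.

Lemma edge_factors_area :
  k1 = - k4 * q3 / q1 -> k2 = k4 * q3 * q4 / (q1 * q2) -> k3 = - k4 * q4 / q2 ->
  k1 * k2 * q1 + k1 * k3 * (q4 - q1) + k2 * k3 * q2 =
  - k4 ^+ 2 * q3 * q4 * (q1 + q3) / (q1 * q2).
Proof.
have -> : q3 = q2 + q4 - q1 by rewrite -hsum; ring.
by move=> -> -> ->; field; rewrite n1 n2.
Qed.

End FactorEquations.

Section QuadAlgebra.
Variable R : realType.

(* The opposite ratio along the edge between the faces of slopes [g3] and [g0], see
   [diag_meet_ratio]. *)
Definition edge_ratio (g0 g1 g2 g3 : R * R) : R :=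
  turn2 g3 g0 g1 * turn2 g2 g3 g0 / (turn2 g1 g2 g3 * turn2 g0 g1 g2).

(* The intersection of the diagonals [g0 g2] and [g1 g3] (see [diag_meet_alt]). *)
Definition diag_meet (g0 g1 g2 g3 : R * R) : R * R :=
  add2 g0 (scale2 (turn2 g3 g0 g1 / (turn2 g0 g1 g2 + turn2 g2 g3 g0)) (sub2 g2 g0)).

Lemma area4_rot (a0 a1 a2 a3 : R * R) : area4 a1 a2 a3 a0 = area4 a0 a1 a2 a3.
Proof. by rewrite /area4; congr (_ / _); ring. Qed.

Lemma mixed4_rot (a0 a1 a2 a3 b0 b1 b2 b3 : R * R) :
  mixed4 a1 a2 a3 a0 b1 b2 b3 b0 = mixed4 a0 a1 a2 a3 b0 b1 b2 b3.
Proof. by rewrite /mixed4; congr (_ / _); ring. Qed.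

Lemma convex_quad2_rot (g0 g1 g2 g3 : R * R) :
  convex_quad2 g0 g1 g2 g3 -> convex_quad2 g1 g2 g3 g0.
Proof. by move=> [s [h1 h2 h3 h4]]; exists s. Qed.

Variables g0 g1 g2 g3 : R * R.
Local Notation q1 := (turn2 g0 g1 g2).
Local Notation q2 := (turn2 g1 g2 g3).
Local Notation q3 := (turn2 g2 g3 g0).
Local Notation q4 := (turn2 g3 g0 g1).
Local Notation M := (diag_meet g0 g1 g2 g3).

Lemma turn2_sum : q1 + q3 = q2 + q4.
Proof. by rewrite /turn2 /det2 /sub2 /=; ring. Qed.

Lemma det2_diagonals : det2 (sub2 g2 g0) (sub2 g3 g1) = q1 + q3.
Proof. by rewrite /turn2 /det2 /sub2 /=; ring. Qed.

Lemma area4_turns : area4 g0 g1 g2 g3 = (q1 + q3) / 2.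
Proof. by rewrite /area4 /turn2 /det2 /sub2 /=; ring. Qed.

Lemma diag_meet_on02 : det2 (sub2 g2 g0) (sub2 M g0) = 0.
Proof. by rewrite /diag_meet /det2 /sub2 /add2 /scale2 /=; ring. Qed.

Hypothesis hconv : convex_quad2 g0 g1 g2 g3.

Lemma turn2_sign : exists s,
  [/\ 0 < q1 * s, 0 < q2 * s, 0 < q3 * s, 0 < q4 * s & 0 < (q1 + q3) * s].
Proof.
by have [s [h1 h2 h3 h4]] := hconv; exists s; split=> //; rewrite mulrDl addr_gt0.
Qed.

Lemma turn2_neq0 : [/\ q1 != 0, q2 != 0, q3 != 0, q4 != 0 & q1 + q3 != 0].
Proof.
have [s [/mulr_gt0_neq0 [? _] /mulr_gt0_neq0 [? _] /mulr_gt0_neq0 [? _]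
         /mulr_gt0_neq0 [? _] /mulr_gt0_neq0 [? _]]] := turn2_sign.
by split.
Qed.

Lemma edge_ratio_gt0 : 0 < edge_ratio g0 g1 g2 g3.
Proof.
have [s [h1 h2 h3 h4 _]] := turn2_sign.
by rewrite /edge_ratio invfM mulrACA mulr_gt0 // (same_sign_div h4 h2, same_sign_div h3 h1).
Qed.

Lemma diag_meet_alt : M = add2 g1 (scale2 (q1 / (q1 + q3)) (sub2 g3 g1)).
Proof.
have [_ _ _ _] := turn2_neq0.
by rewrite /diag_meet /turn2 /add2 /scale2 /det2 /sub2 /= => h; congr pair; field.
Qed.

Lemma diag_meet_on13 : det2 (sub2 g3 g1) (sub2 M g1) = 0.
Proof. by rewrite diag_meet_alt /det2 /sub2 /add2 /scale2 /=; ring. Qed.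

Lemma diag_meet_ratio :
  inorm2 (sub2 g0 M) / inorm2 (sub2 g2 M) * (inorm2 (sub2 g3 M) / inorm2 (sub2 g1 M)) =
  edge_ratio g0 g1 g2 g3.
Proof.
have [n1 n2 n3 n4 n13] := turn2_neq0.
have [s [h1 h2 h3 h4 h13]] := turn2_sign.
have hd : det2 (sub2 g2 g0) (sub2 g3 g1) != 0 by rewrite det2_diagonals.
have [/inorm2_gt0/lt0r_neq0 N02 /inorm2_gt0/lt0r_neq0 N13] := det2_neq0_sqnorm2 hd.
have e0 : sub2 g0 M = scale2 (- (q4 / (q1 + q3))) (sub2 g2 g0).
  by rewrite /diag_meet /sub2 /add2 /scale2 /=; congr pair; ring.
have e2 : sub2 g2 M = scale2 (q2 / (q1 + q3)) (sub2 g2 g0).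
  have -> : q2 / (q1 + q3) = 1 - q4 / (q1 + q3).
    by rewrite turn2_sum; field; rewrite -turn2_sum.
  by rewrite /diag_meet /sub2 /add2 /scale2 /=; congr pair; ring.
have e1 : sub2 g1 M = scale2 (- (q1 / (q1 + q3))) (sub2 g3 g1).
  by rewrite diag_meet_alt /sub2 /add2 /scale2 /=; congr pair; ring.
have e3 : sub2 g3 M = scale2 (q3 / (q1 + q3)) (sub2 g3 g1).
  have -> : q3 / (q1 + q3) = 1 - q1 / (q1 + q3) by field.
  by rewrite diag_meet_alt /sub2 /add2 /scale2 /=; congr pair; ring.
rewrite e0 e1 e2 e3 !inorm2_scale2 !normrN.
rewrite !gtr0_norm ?(same_sign_div h1 h13, same_sign_div h2 h13, same_sign_div h3 h13,
                     same_sign_div h4 h13) //.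
by rewrite /edge_ratio; field; rewrite n1 n2 n13 N02 N13.
Qed.

Section ParallelQuad.
Variables (h0 h1 h2 h3 : R * R) (k1 k2 k3 k4 : R).
Hypothesis r1 : sub2 h1 h0 = scale2 k1 (sub2 g1 g0).
Hypothesis r2 : sub2 h2 h1 = scale2 k2 (sub2 g2 g1).
Hypothesis r3 : sub2 h3 h2 = scale2 k3 (sub2 g3 g2).
Hypothesis r4 : sub2 h0 h3 = scale2 k4 (sub2 g0 g3).

Lemma area4_parallel :
  area4 h0 h1 h2 h3 = (k1 * k2 * q1 + k1 * k3 * (q4 - q1) + k2 * k3 * q2) / 2.
Proof.
have [a1 b1] := sub2_scale2E r1; have [a2 b2] := sub2_scale2E r2.
have [a3 b3] := sub2_scale2E r3.
by rewrite /area4 /det2 a3 b3 a2 b2 a1 b1 /turn2 /det2 /sub2 /=; ring.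
Qed.

Lemma mixed4_parallel :
  mixed4 g0 g1 g2 g3 h0 h1 h2 h3 = (k1 * q4 + k2 * (q1 + q2) + k3 * q3) / 2.
Proof.
have [a1 b1] := sub2_scale2E r1; have [a2 b2] := sub2_scale2E r2.
have [a3 b3] := sub2_scale2E r3.
by rewrite /mixed4 /det2 a3 b3 a2 b2 a1 b1 /turn2 /det2 /sub2 /=; ring.
Qed.

Lemma parallel_closing :
  (k1 - k4) * q1 = (k3 - k4) * q2 /\ (k2 - k4) * q1 = - ((k3 - k4) * (q4 - q1)).
Proof.
(* [S c] is a coordinate of [sum_k k_k (g_(k+1) - g_k)], which vanishes as the [h_k]
   close up. *)
pose S (c : R * R -> R) :=
  k1 * (c g1 - c g0) + k2 * (c g2 - c g1) + k3 * (c g3 - c g2) + k4 * (c g0 - c g3).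
have S1 : S fst = 0.
  have e1 : h1.1 - h0.1 = k1 * (g1.1 - g0.1) := congr1 fst r1.
  have e2 : h2.1 - h1.1 = k2 * (g2.1 - g1.1) := congr1 fst r2.
  have e3 : h3.1 - h2.1 = k3 * (g3.1 - g2.1) := congr1 fst r3.
  have e4 : h0.1 - h3.1 = k4 * (g0.1 - g3.1) := congr1 fst r4.
  by rewrite /S -e1 -e2 -e3 -e4; ring.
have S2 : S snd = 0.
  have e1 : h1.2 - h0.2 = k1 * (g1.2 - g0.2) := congr1 snd r1.
  have e2 : h2.2 - h1.2 = k2 * (g2.2 - g1.2) := congr1 snd r2.
  have e3 : h3.2 - h2.2 = k3 * (g3.2 - g2.2) := congr1 snd r3.
  have e4 : h0.2 - h3.2 = k4 * (g0.2 - g3.2) := congr1 snd r4.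
  by rewrite /S -e1 -e2 -e3 -e4; ring.
split; apply/eqP; rewrite -subr_eq0; apply/eqP.
- have -> : (k1 - k4) * q1 - (k3 - k4) * q2 =
            S fst * (g2.2 - g1.2) - S snd * (g2.1 - g1.1).
    by rewrite /S /turn2 /det2 /sub2 /=; ring.
  by rewrite S1 S2; ring.
- have -> : (k2 - k4) * q1 - - ((k3 - k4) * (q4 - q1)) =
            S snd * (g1.1 - g0.1) - S fst * (g1.2 - g0.2).
    by rewrite /S /turn2 /det2 /sub2 /=; ring.
  by rewrite S1 S2; ring.
Qed.

Lemma opposite_curvature_iff :
  area4 h0 h1 h2 h3 = - area4 g0 g1 g2 g3 /\ mixed4 g0 g1 g2 g3 h0 h1 h2 h3 = 0 <->
  [/\ k1 = - k4 * q3 / q1, k2 = k4 * q3 * q4 / (q1 * q2), k3 = - k4 * q4 / q2 &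
      k4 ^+ 2 = q1 * q2 / (q3 * q4)].
Proof.
have [n1 n2 n3 n4 n13] := turn2_neq0.
have [E1 E2] := parallel_closing.
have solve := edge_factors_solve n1 n2 turn2_sum E1 E2.
rewrite area4_parallel mixed4_parallel area4_turns.
split=> [[hA /eqP]|[hk1 hk2 hk3 hk4]].
- rewrite mulf_eq0 invr_eq0 pnatr_eq0 orbF => /eqP /solve [hk1 hk2 hk3]; split=> //.
  move: hA; rewrite (edge_factors_area n1 n2 turn2_sum hk1 hk2 hk3) => hA.
  have -> : k4 ^+ 2 = - (- k4 ^+ 2 * q3 * q4 * (q1 + q3) / (q1 * q2) / 2) *
                      (2 * (q1 * q2) / (q3 * q4 * (q1 + q3))).
    by field; rewrite n1 n2 n3 n4 n13.
  by rewrite hA; field; rewrite n3 n4 n13.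
- rewrite (edge_factors_area n1 n2 turn2_sum hk1 hk2 hk3) hk4.
  have /solve -> : [/\ k1 = - k4 * q3 / q1, k2 = k4 * q3 * q4 / (q1 * q2)
                    & k3 = - k4 * q4 / q2] by [].
  by rewrite mul0r; split=> //; field; rewrite n1 n2 n3 n4.
Qed.

Lemma opposite_curvature_edge_ratio :
  area4 h0 h1 h2 h3 = - area4 g0 g1 g2 g3 -> mixed4 g0 g1 g2 g3 h0 h1 h2 h3 = 0 ->
  edge_ratio g0 g1 g2 g3 = (k4 ^+ 2)^-1.
Proof.
move=> hA hM; have [_ _ _ ->] := opposite_curvature_iff.1 (conj hA hM).
by have [n1 n2 n3 n4 _] := turn2_neq0; rewrite /edge_ratio; field; rewrite n1 n2 n3 n4.
Qed.

End ParallelQuad.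

End QuadAlgebra.

Section VertexCurvature.
Variable R : realType.
Variables (g0 g1 g2 g3 h0 h1 h2 h3 : R * R) (k1 k2 k3 k4 : R).
Hypothesis hconv : convex_quad2 g0 g1 g2 g3.
Hypothesis r1 : sub2 h1 h0 = scale2 k1 (sub2 g1 g0).
Hypothesis r2 : sub2 h2 h1 = scale2 k2 (sub2 g2 g1).
Hypothesis r3 : sub2 h3 h2 = scale2 k3 (sub2 g3 g2).
Hypothesis r4 : sub2 h0 h3 = scale2 k4 (sub2 g0 g3).

Lemma opposite_curvature_edge_ratios :
  area4 h0 h1 h2 h3 = - area4 g0 g1 g2 g3 -> mixed4 g0 g1 g2 g3 h0 h1 h2 h3 = 0 ->
  [/\ edge_ratio g0 g1 g2 g3 = (k4 ^+ 2)^-1, edge_ratio g1 g2 g3 g0 = (k1 ^+ 2)^-1,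
      edge_ratio g2 g3 g0 g1 = (k2 ^+ 2)^-1 & edge_ratio g3 g0 g1 g2 = (k3 ^+ 2)^-1].
Proof.
have hc1 := convex_quad2_rot hconv; have hc2 := convex_quad2_rot hc1.
have hc3 := convex_quad2_rot hc2.
move=> hA hM.
have hA1 : area4 h1 h2 h3 h0 = - area4 g1 g2 g3 g0 by rewrite (area4_rot h0) (area4_rot g0).
have hA2 : area4 h2 h3 h0 h1 = - area4 g2 g3 g0 g1 by rewrite (area4_rot h1) (area4_rot g1).
have hA3 : area4 h3 h0 h1 h2 = - area4 g3 g0 g1 g2 by rewrite (area4_rot h2) (area4_rot g2).
have hM1 : mixed4 g1 g2 g3 g0 h1 h2 h3 h0 = 0 by rewrite mixed4_rot.
have hM2 : mixed4 g2 g3 g0 g1 h2 h3 h0 h1 = 0 by rewrite mixed4_rot.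
have hM3 : mixed4 g3 g0 g1 g2 h3 h0 h1 h2 = 0 by rewrite mixed4_rot.
split; [exact (opposite_curvature_edge_ratio hconv r1 r2 r3 r4 hA hM)
       | exact (opposite_curvature_edge_ratio hc1 r2 r3 r4 r1 hA1 hM1)
       | exact (opposite_curvature_edge_ratio hc2 r3 r4 r1 r2 hA2 hM2)
       | exact (opposite_curvature_edge_ratio hc3 r4 r1 r2 r3 hA3 hM3)].
Qed.

End VertexCurvature.

Section EdgeFactorValues.
Variable R : realType.

(* The factor along the edge [e] of a vertex with opposite ratio [rho] along that edge:
   its square is [rho^-1] and its sign alternates with the direction of the edge. *)
Definition edge_factor (e : nat) (rho : R) : R :=
  if odd e then Num.sqrt rho^-1 else - Num.sqrt rho^-1.

Variables g0 g1 g2 g3 : R * R.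
Hypothesis hconv : convex_quad2 g0 g1 g2 g3.
Local Notation q1 := (turn2 g0 g1 g2).
Local Notation q2 := (turn2 g1 g2 g3).
Local Notation q3 := (turn2 g2 g3 g0).
Local Notation q4 := (turn2 g3 g0 g1).
Local Notation k1 := (edge_factor 1 (edge_ratio g1 g2 g3 g0)).
Local Notation k2 := (edge_factor 2 (edge_ratio g2 g3 g0 g1)).
Local Notation k3 := (edge_factor 3 (edge_ratio g3 g0 g1 g2)).
Local Notation k4 := (edge_factor 0 (edge_ratio g0 g1 g2 g3)).

Lemma edge_factors_values :
  [/\ k1 = - k4 * q3 / q1, k2 = k4 * q3 * q4 / (q1 * q2), k3 = - k4 * q4 / q2 &
      k4 ^+ 2 = q1 * q2 / (q3 * q4)].
Proof.
have [n1 n2 n3 n4 _] := turn2_neq0 hconv.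
have [s [q1s q2s q3s q4s _]] := turn2_sign hconv.
have rho0 : 0 <= (edge_ratio g0 g1 g2 g3)^-1 by rewrite invr_ge0 ltW // edge_ratio_gt0.
have sqrt_scale a c : 0 <= a -> 0 < c -> Num.sqrt a * c = Num.sqrt (a * c ^+ 2).
  by move=> ha hc; rewrite sqrtrM ?sqrtr_sqr ?gtr0_norm.
rewrite /edge_factor /= !opprK; set S := Num.sqrt _.
split.
- rewrite -mulrA sqrt_scale ?(same_sign_div q3s q1s) //.
  by congr Num.sqrt; rewrite /edge_ratio; field; rewrite n1 n2 n3 n4.
- rewrite -!mulrA mulNr; congr (- _); rewrite mulrA sqrt_scale //.
    by congr Num.sqrt; rewrite /edge_ratio; field; rewrite n1 n2 n3 n4.
  by rewrite invfM mulrACA mulr_gt0 // (same_sign_div q3s q1s, same_sign_div q4s q2s).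
- rewrite -mulrA sqrt_scale ?(same_sign_div q4s q2s) //.
  by congr Num.sqrt; rewrite /edge_ratio; field; rewrite n1 n2 n3 n4.
- by rewrite sqrrN sqr_sqrtr // /edge_ratio; field; rewrite n1 n2 n3 n4.
Qed.

Lemma edge_factors_close (h0 h1 h2 h3 : R * R) :
  sub2 h2 h1 = scale2 k2 (sub2 g2 g1) -> sub2 h3 h2 = scale2 k3 (sub2 g3 g2) ->
  sub2 h0 h3 = scale2 k4 (sub2 g0 g3) -> sub2 h1 h0 = scale2 k1 (sub2 g1 g0).
Proof.
move=> /sub2_scale2E [a2 b2] /sub2_scale2E [a3 b3] /sub2_scale2E [a4 b4].
have [-> e2 e3 _] := edge_factors_values; rewrite e2 e3 in a2 b2 a3 b3.
have [n1 n2 _ _ _] := turn2_neq0 hconv.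
move: n1 n2 a2 b2 a3 b3 a4 b4; set k := k4.
rewrite /sub2 /scale2 /turn2 /det2 /sub2 /= => n1 n2 a2 b2 a3 b3 -> ->.
by rewrite a3 b3 a2 b2; congr pair; field; rewrite n1 n2.
Qed.

Lemma edge_factors_opposite_curvature (h0 h1 h2 h3 : R * R) :
  sub2 h1 h0 = scale2 k1 (sub2 g1 g0) -> sub2 h2 h1 = scale2 k2 (sub2 g2 g1) ->
  sub2 h3 h2 = scale2 k3 (sub2 g3 g2) -> sub2 h0 h3 = scale2 k4 (sub2 g0 g3) ->
  area4 h0 h1 h2 h3 = - area4 g0 g1 g2 g3 /\ mixed4 g0 g1 g2 g3 h0 h1 h2 h3 = 0.
Proof.
move=> r1 r2 r3 r4; apply/(opposite_curvature_iff hconv r1 r2 r3 r4).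
exact: edge_factors_values.
Qed.

End EdgeFactorValues.

Section VertexRatio.
Variable R : realType.
Implicit Types (F : nat -> nat -> pt R).

Lemma convex_vertex_opp_ratio (p0 p1 p2 p3 : pt R -> Prop) (g0 g1 g2 g3 : R * R)
    (c0 c1 c2 c3 : R) V r :
  convex_quad2 g0 g1 g2 g3 ->
  is_np p0 g0.1 g0.2 c0 -> is_np p1 g1.1 g1.2 c1 ->
  is_np p2 g2.1 g2.2 c2 -> is_np p3 g3.1 g3.2 c3 ->
  p0 V -> p1 V -> p2 V -> p3 V ->
  (opp_ratio p0 p1 p2 p3 r <-> r = edge_ratio g0 g1 g2 g3).
Proof.
move=> hc h0 h1 h2 h3 v0 v1 v2 v3.
have [_ _ _ _ n13] := turn2_neq0 hc.
have hd : det2 (sub2 g2 g0) (sub2 g3 g1) != 0 by rewrite det2_diagonals.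
rewrite (opp_ratio_iff _ h0 h1 h2 h3 v0 v1 v2 v3 (diag_meet_on02 _ _ _ _)
           (diag_meet_on13 hc) hd).
by rewrite diag_meet_ratio.
Qed.

Definition vertex_ratio F i j e : R :=
  edge_ratio (gauss_slope F i j e) (gauss_slope F i j e.+1)
             (gauss_slope F i j e.+2) (gauss_slope F i j e.+3).

Lemma vopp_ratio_iff m n F i j e r : dual_convex m n F -> nonboundary m n i.+1 j.+1 ->
  (e < 4)%N -> (vopp_ratio F i.+1 j.+1 e r <-> r = vertex_ratio F i j e).
Proof.
move=> hd hnb he.
have [f0 f1 f2 f3 hc] := dual_convex_vertex hd hnb.
have [_ [_ [hnet _]]] := hd; have [_ [him [_ hjn]]] := hnb.
have [v0 _ _ _] := face_on_plane (hnet _ _ him hjn) f0.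
have [_ v1 _ _] := face_on_plane (hnet _ _ (ltnW him) hjn) f1.
have [_ _ v2 _] := face_on_plane (hnet _ _ (ltnW him) (ltnW hjn)) f2.
have [_ _ _ v3] := face_on_plane (hnet _ _ him (ltnW hjn)) f3.
move: (face_mem f0 v0) (face_mem f1 v1) (face_mem f2 v2) (face_mem f3 v3).
move: (face_np f0) (face_np f1) (face_np f2) (face_np f3) => n0 n1 n2 n3 w0 w1 w2 w3.
have hc1 := convex_quad2_rot hc; have hc2 := convex_quad2_rot hc1.
have hc3 := convex_quad2_rot hc2.
case: e he => [|[|[|[|e]]]] // _.
- exact: convex_vertex_opp_ratio hc n0 n1 n2 n3 w0 w1 w2 w3.
- exact: convex_vertex_opp_ratio hc1 n1 n2 n3 n0 w1 w2 w3 w0.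
- exact: convex_vertex_opp_ratio hc2 n2 n3 n0 n1 w2 w3 w0 w1.
- exact: convex_vertex_opp_ratio hc3 n3 n0 n1 n2 w3 w0 w1 w2.
Qed.

End VertexRatio.

Section VParallel.
Variable R : realType.
Implicit Types (F G : nat -> nat -> pt R).

Lemma shared_edge_parallel (gF gF' gG gG' : R * R) A A' B B' P Q P' Q' :
  sqnorm2 (top (psub Q P)) != 0 -> sqnorm2 (sub2 gF' gF) != 0 ->
  top (psub Q' P') = top (psub Q P) ->
  on_plane gF A P -> on_plane gF A Q -> on_plane gF' A' P -> on_plane gF' A' Q ->
  on_plane gG B P' -> on_plane gG B Q' -> on_plane gG' B' P' -> on_plane gG' B' Q' ->
  exists k, sub2 gG' gG = scale2 k (sub2 gF' gF).
Proof.
move=> hPQ hg eQP a1 a2 a3 a4 b1 b2 b3 b4.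
apply: orthogonal_parallel hPQ hg (edge_orthogonal a1 a2 a3 a4) _.
by rewrite -eQP; apply: edge_orthogonal b1 b2 b3 b4.
Qed.

Lemma v_parallel_top_sub m n F G a b c d : v_parallel m n F G ->
  (a <= m)%N -> (b <= n)%N -> (c <= m)%N -> (d <= n)%N ->
  top (psub (G a b) (G c d)) = top (psub (F a b) (F c d)).
Proof.
move=> hv ha hb hc hd; move: (hv a b ha hb) (hv c d hc hd).
by rewrite /top /= => -[-> ->] [-> ->].
Qed.

Lemma v_parallel_face_regular m n F G i j : v_parallel m n F G -> (i < m)%N -> (j < n)%N ->
  face_regular F i j -> face_regular G i j.
Proof.
by move=> hv hi hj; rewrite /face_regular /topdet !(v_parallel_top_sub hv) // ltnW.
Qed.

Lemma vertex_gauss_parallel m n F G i j : dual_convex m n F -> net m n G ->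
  v_parallel m n F G -> nonboundary m n i.+1 j.+1 ->
  exists k1 k2 k3 k4,
  [/\ sub2 (gauss_slope G i j 1) (gauss_slope G i j 0) =
        scale2 k1 (sub2 (gauss_slope F i j 1) (gauss_slope F i j 0)),
      sub2 (gauss_slope G i j 2) (gauss_slope G i j 1) =
        scale2 k2 (sub2 (gauss_slope F i j 2) (gauss_slope F i j 1)),
      sub2 (gauss_slope G i j 3) (gauss_slope G i j 2) =
        scale2 k3 (sub2 (gauss_slope F i j 3) (gauss_slope F i j 2)) &
      sub2 (gauss_slope G i j 0) (gauss_slope G i j 3) =
        scale2 k4 (sub2 (gauss_slope F i j 0) (gauss_slope F i j 3))].
Proof.
move=> hd hG hv hnb.
have [f0 f1 f2 f3 hc] := dual_convex_vertex hd hnb.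
have [_ [_ [hF _]]] := hd; have [_ [hi [_ hj]]] := hnb.
have hi1 := ltnW hi; have hj1 := ltnW hj; have hi0 := ltnW hi1; have hj0 := ltnW hj1.
have [a00 a01 _ a03] := face_on_plane (hF _ _ hi hj) f0.
have [a10 a11 a12 _] := face_on_plane (hF _ _ hi1 hj) f1.
have [_ a21 a22 a23] := face_on_plane (hF _ _ hi1 hj1) f2.
have [a30 _ a32 a33] := face_on_plane (hF _ _ hi hj1) f3.
have [b00 b01 _ b03] := face_on_plane (hG _ _ hi hj) (v_parallel_face_regular hv hi hj f0).
have [b10 b11 b12 _] := face_on_plane (hG _ _ hi1 hj) (v_parallel_face_regular hv hi1 hj f1).
have [_ b21 b22 b23] :=
  face_on_plane (hG _ _ hi1 hj1) (v_parallel_face_regular hv hi1 hj1 f2).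
have [b30 _ b32 b33] := face_on_plane (hG _ _ hi hj1) (v_parallel_face_regular hv hi hj1 f3).
have [n1 _ n3 _ _] := turn2_neq0 hc.
have [g10 g21] := det2_neq0_sqnorm2 n1; have [g32 g03] := det2_neq0_sqnorm2 n3.
have [u0 v0] := det2_neq0_sqnorm2 f0; have [u1 _] := det2_neq0_sqnorm2 f1.
have [_ v3] := det2_neq0_sqnorm2 f3.
have tv := v_parallel_top_sub hv.
have [k1 e1] := shared_edge_parallel v0 g10 (tv _ _ _ _ hi1 hj hi1 hj1)
                  a00 a03 a11 a12 b00 b03 b11 b12.
have [k2 e2] := shared_edge_parallel u1 g21 (tv _ _ _ _ hi1 hj1 hi0 hj1)
                  a10 a11 a23 a22 b10 b11 b23 b22.
have [k3 e3] := shared_edge_parallel v3 g32 (tv _ _ _ _ hi1 hj1 hi1 hj0)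
                  a21 a22 a30 a33 b21 b22 b30 b33.
have [k4 e4] := shared_edge_parallel u0 g03 (tv _ _ _ _ hi hj1 hi1 hj1)
                  a33 a32 a00 a01 b33 b32 b00 b01.
by exists k1, k2, k3, k4.
Qed.

End VParallel.

Section Backward.
Variable R : realType.
Implicit Types (F G : nat -> nat -> pt R).

Lemma gauss_vertex F i j k : face_regular F i.+1 j.+1 -> face_regular F i j.+1 ->
  face_regular F i j -> face_regular F i.+1 j -> (k < 4)%N ->
  gauss F i.+1 j.+1 k = gauss_slope F i j k.
Proof. by move=> f0 f1 f2 f3; case: k => [|[|[|[|k]]]] // _; apply: top_dual_face. Qed.

Lemma opposite_curvature_vertex_ratio m n F G i j e k : dual_convex m n F -> net m n G ->
  v_parallel m n F G -> nonboundary m n i.+1 j.+1 ->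
  curv G i.+1 j.+1 = - curv F i.+1 j.+1 -> mixed_curv F G i.+1 j.+1 = 0 -> (e < 4)%N ->
  sub2 (gauss_slope G i j e) (gauss_slope G i j e.+3) =
    scale2 k (sub2 (gauss_slope F i j e) (gauss_slope F i j e.+3)) ->
  vertex_ratio F i j e = (k ^+ 2)^-1.
Proof.
move=> hd hG hv hnb hA hM he hk.
have [f0 f1 f2 f3 hc] := dual_convex_vertex hd hnb.
have [_ [hi [_ hj]]] := hnb; have hi' := ltnW hi; have hj' := ltnW hj.
have e0 := v_parallel_face_regular hv hi hj f0.
have e1 := v_parallel_face_regular hv hi' hj f1.
have e2 := v_parallel_face_regular hv hi' hj' f2.
have e3 := v_parallel_face_regular hv hi hj' f3.
have [k1 [k2 [k3 [k4 [r1 r2 r3 r4]]]]] := vertex_gauss_parallel hd hG hv hnb.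
move: hA hM; rewrite /curv /mixed_curv !(gauss_vertex f0 f1 f2 f3) //.
rewrite !(gauss_vertex e0 e1 e2 e3) // => hA hM.
have [t0 t1 t2 t3] := opposite_curvature_edge_ratios hc r1 r2 r3 r4 hA hM.
have [n1 _ n3 _ _] := turn2_neq0 hc.
have [g10 g21] := det2_neq0_sqnorm2 n1; have [g32 g03] := det2_neq0_sqnorm2 n3.
case: e he hk => [|[|[|[|e]]]] // _ hk; rewrite /vertex_ratio.
- by rewrite t0 (scale2I g03 (etrans (esym hk) r4)).
- by rewrite t1 (scale2I g10 (etrans (esym hk) r1)).
- by rewrite t2 (scale2I g21 (etrans (esym hk) r2)).
- by rewrite t3 (scale2I g32 (etrans (esym hk) r3)).
Qed.

Lemma equal_opp_ratios_of_parallel m n F G : dual_convex m n F -> net m n G ->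
  v_parallel m n F G ->
  (forall i j, nonboundary m n i j -> curv G i j = - curv F i j /\ mixed_curv F G i j = 0) ->
  equal_opp_ratios m n F.
Proof.
move=> hd hG hv hc.
have ratio i j e k : nonboundary m n i.+1 j.+1 -> (e < 4)%N ->
    sub2 (gauss_slope G i j e) (gauss_slope G i j e.+3) =
      scale2 k (sub2 (gauss_slope F i j e) (gauss_slope F i j e.+3)) ->
    vertex_ratio F i j e = (k ^+ 2)^-1.
  move=> hnb; have [hA hM] := hc _ _ hnb.
  exact: opposite_curvature_vertex_ratio hd hG hv hnb hA hM.
split=> [] [|i] [|j] nb1 nb2; try by (exfalso; move: nb1 => [? [? [? ?]]]; lia).
- have [? [? [? [k [_ _ _ r4]]]]] := vertex_gauss_parallel hd hG hv nb1.
  exists (vertex_ratio F i j 0); split; first exact/(vopp_ratio_iff _ hd nb1).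
  apply/(vopp_ratio_iff _ hd nb2) => //.
  by rewrite (ratio _ _ 0 _ nb1 isT r4) (ratio _ _ 2 _ nb2 isT (sub2_scale2C r4)).
- have [k [? [? [? [r1 _ _ _]]]]] := vertex_gauss_parallel hd hG hv nb1.
  exists (vertex_ratio F i j 1); split; first exact/(vopp_ratio_iff _ hd nb1).
  apply/(vopp_ratio_iff _ hd nb2) => //.
  by rewrite (ratio _ _ 1 _ nb1 isT r1) (ratio _ _ 3 _ nb2 isT (sub2_scale2C r1)).
Qed.

End Backward.

Section PlanarQuad.
Variable R : realType.
Implicit Types (g : R * R) (A X Y Z W : pt R).

Lemma turn_dot g A X Y Z W : on_plane g A X -> on_plane g A Y -> on_plane g A Z ->
  on_plane g A W ->
  dot (turn X Y Z) (turn Y Z W) =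
  det2 (top (psub Y X)) (top (psub Z Y)) * det2 (top (psub Z Y)) (top (psub W Z)) *
  (g.1 * g.1 + g.2 * g.2 + 1).
Proof.
by rewrite /on_plane /turn /dot /cross /det2 /top /rise /dot2 /= => -> -> -> ->; ring.
Qed.

Lemma turn_dot_gt0_top g g' A A' X Y Z W X' Y' Z' W' :
  on_plane g A X -> on_plane g A Y -> on_plane g A Z -> on_plane g A W ->
  on_plane g' A' X' -> on_plane g' A' Y' -> on_plane g' A' Z' -> on_plane g' A' W' ->
  top X' = top X -> top Y' = top Y -> top Z' = top Z -> top W' = top W ->
  0 < dot (turn X Y Z) (turn Y Z W) -> 0 < dot (turn X' Y' Z') (turn Y' Z' W').
Proof.
move=> x y z w x' y' z' w' tX tY tZ tW.
have pos (g0 : R * R) : 0 < g0.1 * g0.1 + g0.2 * g0.2 + 1 by nra.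
have tsub (P Q P' Q' : pt R) :
    top P' = top P -> top Q' = top Q -> top (psub Q' P') = top (psub Q P).
  by rewrite /top /= => -[-> ->] [-> ->].
rewrite (turn_dot x y z w) (turn_dot x' y' z' w') (tsub _ _ _ _ tX tY).
rewrite (tsub _ _ _ _ tY tZ) (tsub _ _ _ _ tZ tW).
by rewrite (pmulr_lgt0 _ (pos g)) (pmulr_lgt0 _ (pos g')).
Qed.

Lemma convex_quad_top g g' A A' X Y Z W X' Y' Z' W' :
  on_plane g A X -> on_plane g A Y -> on_plane g A Z -> on_plane g A W ->
  on_plane g' A' X' -> on_plane g' A' Y' -> on_plane g' A' Z' -> on_plane g' A' W' ->
  top X' = top X -> top Y' = top Y -> top Z' = top Z -> top W' = top W ->
  convex_quad X Y Z W -> convex_quad X' Y' Z' W'.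
Proof.
move=> x y z w x' y' z' w' tX tY tZ tW [_ [c1 [c2 [c3 c4]]]]; split.
  rewrite (det3_slope _ (on_plane_sub x' y') (on_plane_sub x' z')).
  by rewrite (on_plane_sub x' w') subrr mulr0.
split; first exact: turn_dot_gt0_top x y z w x' y' z' w' tX tY tZ tW c1.
split; first exact: turn_dot_gt0_top y z w x y' z' w' x' tY tZ tW tX c2.
split; first exact: turn_dot_gt0_top z w x y z' w' x' y' tZ tW tX tY c3.
exact: turn_dot_gt0_top w x y z w' x' y' z' tW tX tY tZ c4.
Qed.

End PlanarQuad.

Section Forward.
Variable R : realType.
Variables (m n : nat) (F : nat -> nat -> pt R).
Hypothesis hd : dual_convex m n F.
Hypothesis heq : equal_opp_ratios m n F.

Local Notation gF := (face_slope F).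

Lemma nonboundary_succ i j : (i.+1 < m)%N -> (j.+1 < n)%N -> nonboundary m n i.+1 j.+1.
Proof. by rewrite /nonboundary. Qed.

Lemma shared_vertex_ratio :
  (forall i j, (i.+2 < m)%N -> (j.+1 < n)%N ->
     vertex_ratio F i j 0 = vertex_ratio F i.+1 j 2) /\
  (forall i j, (i.+1 < m)%N -> (j.+2 < n)%N ->
     vertex_ratio F i j 1 = vertex_ratio F i j.+1 3).
Proof.
split=> i j hi hj.
- have nb1 := nonboundary_succ (ltnW hi) hj; have nb2 := nonboundary_succ hi hj.
  by have [r [/(vopp_ratio_iff (e := 0) _ hd nb1 isT) <-
                /(vopp_ratio_iff (e := 2) _ hd nb2 isT) <-]] := heq.1 _ _ nb1 nb2.
- have nb1 := nonboundary_succ hi (ltnW hj); have nb2 := nonboundary_succ hi hj.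
  by have [r [/(vopp_ratio_iff (e := 1) _ hd nb1 isT) <-
                /(vopp_ratio_iff (e := 3) _ hd nb2 isT) <-]] := heq.2 _ _ nb1 nb2.
Qed.

(* The factor between the slopes of the faces (i, j) and (i.+1, j) of the parallel net,
   read off the opposite ratio at an end of their common edge; both ends agree by
   [shared_vertex_ratio]. *)
Definition hfactor i j : R :=
  edge_factor 1 (if (j.+1 < n)%N then vertex_ratio F i j 3 else vertex_ratio F i j.-1 1).

(* The same for the faces (i, j) and (i, j.+1). *)
Definition vfactor i j : R :=
  edge_factor 0 (if (i.+1 < m)%N then vertex_ratio F i j 2 else vertex_ratio F i.-1 j 0).

Lemma hfactor3 i j : (j.+1 < n)%N -> hfactor i j = edge_factor 3 (vertex_ratio F i j 3).
Proof. by rewrite /hfactor => ->. Qed.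

Lemma hfactor1 i j : (i.+1 < m)%N -> (j.+1 < n)%N ->
  hfactor i j.+1 = edge_factor 1 (vertex_ratio F i j 1).
Proof.
by move=> hi hj; rewrite /hfactor; case: ifP => // /(shared_vertex_ratio.2 _ _ hi) ->.
Qed.

Lemma vfactor2 i j : (i.+1 < m)%N -> vfactor i j = edge_factor 2 (vertex_ratio F i j 2).
Proof. by rewrite /vfactor => ->. Qed.

Lemma vfactor0 i j : (i.+1 < m)%N -> (j.+1 < n)%N ->
  vfactor i.+1 j = edge_factor 0 (vertex_ratio F i j 0).
Proof.
by move=> hi hj; rewrite /vfactor; case: ifP => // /shared_vertex_ratio.1 -> //.
Qed.

Fixpoint row_slope i : R * R :=
  if i is i'.+1 then
    add2 (row_slope i') (scale2 (hfactor i' 0) (sub2 (gF i'.+1 0) (gF i' 0)))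
  else (0, 0).

Fixpoint par_slope i j : R * R :=
  if j is j'.+1 then
    add2 (par_slope i j') (scale2 (vfactor i j') (sub2 (gF i j'.+1) (gF i j')))
  else row_slope i.

Lemma par_slope_vrel i j :
  sub2 (par_slope i j.+1) (par_slope i j) = scale2 (vfactor i j) (sub2 (gF i j.+1) (gF i j)).
Proof. exact: sub2_add2. Qed.

Lemma par_slope_hrel i j : (i.+1 < m)%N -> (j < n)%N ->
  sub2 (par_slope i.+1 j) (par_slope i j) = scale2 (hfactor i j) (sub2 (gF i.+1 j) (gF i j)).
Proof.
move=> hi; elim: j => [|j IH] hj; first exact: sub2_add2.
have [_ _ _ _ hc] := dual_convex_vertex hd (nonboundary_succ hi hj).
have r2 := sub2_scale2C (par_slope_vrel i j); rewrite vfactor2 // in r2.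
have r3 := IH (ltnW hj); rewrite hfactor3 // in r3.
have r4 := par_slope_vrel i.+1 j; rewrite vfactor0 // in r4.
by rewrite hfactor1 //; exact: sub2_scale2C (edge_factors_close hc r2 r3 r4).
Qed.

Lemma par_slope_vertex i j : (i.+1 < m)%N -> (j.+1 < n)%N ->
  [/\ sub2 (par_slope i j.+1) (par_slope i.+1 j.+1) =
        scale2 (edge_factor 1 (vertex_ratio F i j 1)) (sub2 (gF i j.+1) (gF i.+1 j.+1)),
      sub2 (par_slope i j) (par_slope i j.+1) =
        scale2 (edge_factor 2 (vertex_ratio F i j 2)) (sub2 (gF i j) (gF i j.+1)),
      sub2 (par_slope i.+1 j) (par_slope i j) =
        scale2 (edge_factor 3 (vertex_ratio F i j 3)) (sub2 (gF i.+1 j) (gF i j)) &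
      sub2 (par_slope i.+1 j.+1) (par_slope i.+1 j) =
        scale2 (edge_factor 0 (vertex_ratio F i j 0)) (sub2 (gF i.+1 j.+1) (gF i.+1 j))].
Proof.
move=> hi hj; split.
- by rewrite -hfactor1 //; apply: sub2_scale2C; apply: par_slope_hrel.
- by rewrite -vfactor2 //; apply: sub2_scale2C; apply: par_slope_vrel.
- by rewrite -hfactor3 //; apply: par_slope_hrel => //; apply: ltnW.
- by rewrite -vfactor0 //; apply: par_slope_vrel.
Qed.

Lemma face_corners a b : (a < m)%N -> (b < n)%N ->
  [/\ on_plane (gF a b) (F a b) (F a b), on_plane (gF a b) (F a b) (F a.+1 b),
      on_plane (gF a b) (F a b) (F a.+1 b.+1) & on_plane (gF a b) (F a b) (F a b.+1)].
Proof.
move=> ha hb; have [_ [_ [hF _]]] := hd.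
exact: face_on_plane (hF _ _ ha hb) (dual_convex_face_regular hd ha hb).
Qed.

Fixpoint row_height i : R :=
  if i is i'.+1 then row_height i' + rise (par_slope i' 0) (psub (F i'.+1 0) (F i' 0))
  else 0.

(* A face containing the edge from (i, j) to (i, j.+1). *)
Definition edge_col i : nat := if (i < m)%N then i else m.-1.

Fixpoint par_height i j : R :=
  if j is j'.+1 then
    par_height i j' + rise (par_slope (edge_col i) j') (psub (F i j'.+1) (F i j'))
  else row_height i.

Definition par_net i j : pt R := Pt (px (F i j)) (py (F i j)) (par_height i j).

Lemma par_height_left a b : (a < m)%N ->
  par_height a b.+1 - par_height a b = rise (par_slope a b) (psub (F a b.+1) (F a b)).
Proof. by move=> ha; rewrite /= /edge_col ha addrC addKr. Qed.

Lemma par_height_right a b : (a < m)%N -> (b < n)%N ->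
  par_height a.+1 b.+1 - par_height a.+1 b = rise (par_slope a b) (psub (F a.+1 b.+1) (F a.+1 b)).
Proof.
move=> ha hb; rewrite /= addrC addKr /edge_col.
case: ifP => h; last by have -> : m.-1 = a by lia.
apply: rise_parallel (par_slope_hrel h hb) _.
have [_ c1 c2 _] := face_corners ha hb; have [d0 _ _ d3] := face_corners h hb.
exact: edge_orthogonal c1 c2 d0 d3.
Qed.

Lemma par_height_bottom a b : (a < m)%N -> (b < n)%N ->
  par_height a.+1 b - par_height a b = rise (par_slope a b) (psub (F a.+1 b) (F a b)).
Proof.
move=> ha; elim: b => [|b IH] hb; first by rewrite /= addrC addKr.
have hb' := ltnW hb.
have -> : par_height a.+1 b.+1 - par_height a b.+1 =
    (par_height a.+1 b.+1 - par_height a.+1 b) + (par_height a.+1 b - par_height a b)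
    - (par_height a b.+1 - par_height a b) by ring.
rewrite par_height_right // IH // par_height_left //.
have -> : rise (par_slope a b) (psub (F a.+1 b.+1) (F a.+1 b)) +
          rise (par_slope a b) (psub (F a.+1 b) (F a b)) -
          rise (par_slope a b) (psub (F a b.+1) (F a b)) =
          rise (par_slope a b) (psub (F a.+1 b.+1) (F a b.+1)).
  by rewrite /rise /dot2 /=; ring.
apply: esym; apply: rise_parallel (par_slope_vrel a b) _.
have [_ _ c2 c3] := face_corners ha hb'; have [d0 d1 _ _] := face_corners ha hb.
exact: edge_orthogonal c3 c2 d0 d1.
Qed.

Lemma par_net_corners a b : (a < m)%N -> (b < n)%N ->
  [/\ on_plane (par_slope a b) (par_net a b) (par_net a b),
      on_plane (par_slope a b) (par_net a b) (par_net a.+1 b),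
      on_plane (par_slope a b) (par_net a b) (par_net a.+1 b.+1) &
      on_plane (par_slope a b) (par_net a b) (par_net a b.+1)].
Proof.
move=> ha hb.
have hr g c d : rise g (psub (par_net c d) (par_net a b)) = rise g (psub (F c d) (F a b)) by [].
have eB := par_height_bottom ha hb; have eL := par_height_left b ha.
have eR := par_height_right ha hb.
have hz c d : pz (par_net c d) = par_height c d by [].
rewrite /on_plane !hr !hz; split.
- by rewrite /rise /dot2 /=; ring.
- by rewrite -eB; ring.
- have -> : par_height a.+1 b.+1 = par_height a b + (par_height a.+1 b - par_height a b)
                                  + (par_height a.+1 b.+1 - par_height a.+1 b) by ring.
  by rewrite eB eR /rise /dot2 /=; ring.
- by rewrite -eL; ring.
Qed.

Lemma par_net_v_parallel : v_parallel m n F par_net.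
Proof. by []. Qed.

Lemma par_net_net : net m n par_net.
Proof.
move=> a b ha hb; have [_ [_ [hF _]]] := hd.
have [f0 f1 f2 f3] := face_corners ha hb; have [g0 g1 g2 g3] := par_net_corners ha hb.
exact: convex_quad_top f0 f1 f2 f3 g0 g1 g2 g3 erefl erefl erefl erefl (hF _ _ ha hb).
Qed.

Lemma par_net_face_slope a b : (a < m)%N -> (b < n)%N -> face_slope par_net a b = par_slope a b.
Proof.
move=> ha hb.
have hreg := v_parallel_face_regular par_net_v_parallel ha hb (dual_convex_face_regular hd ha hb).
have [g0 g1 _ g3] := par_net_corners ha hb.
exact: slope_unique hreg (on_plane_sub g0 g1) (on_plane_sub g0 g3).
Qed.

Lemma par_net_curv i j : nonboundary m n i j ->
  curv par_net i j = - curv F i j /\ mixed_curv F par_net i j = 0.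
Proof.
case: i j => [|i] [|j] nb; try by (exfalso; case: nb; lia).
have [_ [hi [_ hj]]] := nb; have hi' := ltnW hi; have hj' := ltnW hj.
have [f0 f1 f2 f3 hc] := dual_convex_vertex hd nb.
have hv := par_net_v_parallel.
have e0 := v_parallel_face_regular hv hi hj f0.
have e1 := v_parallel_face_regular hv hi' hj f1.
have e2 := v_parallel_face_regular hv hi' hj' f2.
have e3 := v_parallel_face_regular hv hi hj' f3.
rewrite /curv /mixed_curv !(gauss_vertex f0 f1 f2 f3) // !(gauss_vertex e0 e1 e2 e3) //.
have G0 : gauss_slope par_net i j 0 = par_slope i.+1 j.+1 := par_net_face_slope hi hj.
have G1 : gauss_slope par_net i j 1 = par_slope i j.+1 := par_net_face_slope hi' hj.
have G2 : gauss_slope par_net i j 2 = par_slope i j := par_net_face_slope hi' hj'.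
have G3 : gauss_slope par_net i j 3 = par_slope i.+1 j := par_net_face_slope hi hj'.
rewrite G0 G1 G2 G3; have [r1 r2 r3 r4] := par_slope_vertex hi hj.
exact (edge_factors_opposite_curvature hc r1 r2 r3 r4).
Qed.

Lemma parallel_net_of_equal_opp_ratios : exists G : nat -> nat -> pt R,
  net m n G /\ v_parallel m n F G /\
  (forall i j, nonboundary m n i j -> curv G i j = - curv F i j /\ mixed_curv F G i j = 0).
Proof. by exists par_net; split; [|split]; [exact: par_net_net | | exact: par_net_curv]. Qed.

End Forward.

Unset Implicit Arguments.

Theorem proposition5 (R : realType) (m n : nat) (F : nat -> nat -> pt R) :
  dual_convex m n F ->
  (equal_opp_ratios m n F <->
   exists G : nat -> nat -> pt R,
     net m n G /\ v_parallel m n F G /\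
     (forall i j, nonboundary m n i j ->
        curv G i j = - curv F i j /\ mixed_curv F G i j = 0)).
Proof.
move=> hd; split; first exact: parallel_net_of_equal_opp_ratios.
by case=> G [hG [hv hc]]; apply: equal_opp_ratios_of_parallel hd hG hv hc.
Qed.
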